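(* Let $p$ be a prime and let $G$ be a group of order $p^7$ and nilpotency class $4$ such that $\gamma_2(G)$ is elementary abelian of order $p^5$. Then $\operatorname{Z}(G) = \gamma_4(G)$, and this subgroup has order $p^2$.
   Context: $\gamma_i(G)$ denotes the $i$-th term of the lower central series of $G$ and $\operatorname{Z}(G)$ its center. *)

From mathcomp Require Import all_boot all_fingroup all_solvable.

From mathcomp Require Import all_boot all_fingroup all_solvable.
Set Implicit Arguments.
Unset Strict Implicit.
Unset Printing Implicit Defensive.
Local Open Scope group_scope.

(* Write L_i for 'L_i(G). For c in the abelian normal subgroup L_2, the map
   g |-> [c, g] is a homomorphism modulo [M, G] as soon as [c, G] <= M, since
   the [c, g] commute and [c, a, b] lies in [M, G]; its kernel contains C_G(c),
   and when N = <c>M its image is [N, G]/[M, G]. Hence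
   |[N, G] : [M, G]| <= |G : C_G(c)|.
   As L_2 <= Phi(G) has index p^2, G is generated by two elements x, y, so
   L_2/L_3 is generated by the image of [x, y] and has order p. Taking c in
   L_2 \ L_3 gives |L_3 : L_4| <= p^2; were |L_3 : L_4| = p, taking c in
   L_3 \ L_4 would give |L_4| <= p^2 < p^3. So |L_3 : L_4| = |L_4| = p^2.
   Now let z be central. If z is not in L_2, then G = <z, t> is abelian. If z
   lies in L_2 \ L_3, then C_G(z) = G forces L_3 = L_4. If z lies in L_3 \ L_4,
   then z = [c, w] mod L_4 with w outside L_2; every element of L_3 is some
   [c, s] mod L_4, and [c, s, w] = [c, w, s] = 1, so w centralises L_3. With
   N = L_3 and M = <z>L_4 central, this gives |L_4| <= |G : <w>L_2| = p. *)

Section CommutatorImage.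

Variables (gT : finGroupType) (G A N M : {group gT}) (c : gT).
Hypotheses (nsAG : A <| G) (abA : abelian A) (sNA : N \subset A) (sMN : M \subset N).
Hypothesis sNG_M : [~: N, G] \subset M.
Hypotheses (prime_NM : prime #|N : M|) (Nc : c \in N) (notMc : c \notin M).

Local Notation K := [~: M, G].

Let sAG : A \subset G := normal_sub nsAG.
Let nKG : G \subset 'N(K) := commg_normr G M.

Let commc_in_A g : g \in G -> [~ c, g] \in A.
Proof.
move=> Gg; have Ac := subsetP sNA c Nc.
by rewrite commgEl groupMl ?groupV // memJ_norm // (subsetP (normal_norm nsAG)).
Qed.

Definition comm_coset g := coset K [~ c, g].

Lemma comm_cosetM : {in G &, {morph comm_coset : a b / a * b}}.
Proof.
move=> a b Ga Gb; have Gc := subsetP sAG c (subsetP sNA c Nc).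
have nK x : x \in G -> x \in 'N(K) := subsetP nKG x.
have cab_K : [~ c, a, b] \in K.
  by rewrite mem_commg // (subsetP sNG_M) ?mem_commg.
have Nca : [~ c, a] \in 'N(K) by rewrite nK ?groupR.
have Ncb : [~ c, b] \in 'N(K) by rewrite nK ?groupR.
have Ncab : [~ c, a, b] \in 'N(K) by rewrite nK ?groupR.
have Nca_cb : [~ c, a] * [~ c, b] \in 'N(K) by rewrite groupM.
rewrite /comm_coset commgMJ conjg_mulR mulgA.
rewrite (centsP abA _ (commc_in_A Gb) _ (commc_in_A Ga)) morphM // morphM //.
by have -> : coset_morphism K [~ c, a, b] = 1 := coset_id cab_K; rewrite mulg1.
Qed.

Canonical comm_coset_morphism := Morphism comm_cosetM.

Lemma cent1_sub_ker_comm_coset : 'C_G[c] \subset 'ker comm_coset_morphism.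
Proof.
apply/subsetP=> g /setIP[Gg /cent1P cgc]; apply/kerP=> //=.
have /commgP/eqP cg1 : commute c g by apply: commute_sym.
by rewrite /comm_coset cg1 morph1.
Qed.

Lemma commg_quotient_sub_image : [~: N, G] / K \subset comm_coset_morphism @* G.
Proof.
have Gc := subsetP sAG c (subsetP sNA c Nc).
have nK x : x \in G -> x \in 'N(K) := subsetP nKG x.
have nsMN : M <| N.
  rewrite /normal sMN cents_norm // centsC (subset_trans sMN) //.
  exact: abelianS sNA abA.
have defN : M * <[c]> = N.
  by apply: mulg_normal_maximal; rewrite ?p_index_maximal ?cycle_subG.
have sNG : N \subset G := subset_trans sNA sAG.
rewrite quotient_gen; last first.
  by apply/subsetP=> _ /imset2P[n g Nn Gg ->]; rewrite nK // groupR // (subsetP sNG).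
rewrite gen_subG; apply/subsetP=> _ /morphimP[_ _ /imset2P[n g Nn Gg ->] ->].
rewrite -defN in Nn; case/mulsgP: Nn => m _ Mm /cycleP[i ->] ->.
have Gm : m \in G := subsetP sNG m (subsetP sMN m Mm).
have Gci : c ^+ i \in G by rewrite groupX.
have mgK : [~ m, g] ^ (c ^+ i) \in K by rewrite memJ_norm ?mem_commg ?nK.
rewrite commMgJ morphM ?nK ?groupJ ?groupR //.
have -> : coset_morphism K ([~ m, g] ^ (c ^+ i)) = 1 := coset_id mgK.
rewrite mul1g commXg; last exact: (centsP abA) _ (subsetP sNA c Nc) _ (commc_in_A Gg).
rewrite morphX ?nK ?groupR // -[_ ^+ i]/(comm_coset_morphism g ^+ i) -morphX //.
by rewrite mem_morphim ?groupX.
Qed.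

Lemma index_commg_le_cent1 : #|[~: N, G] : K| <= #|G : 'C_G[c]|.
Proof.
have sNG : N \subset G := subset_trans sNA sAG.
rewrite -card_quotient; last exact: subset_trans (comm_subG sNG (subxx G)) nKG.
apply: leq_trans (subset_leq_card commg_quotient_sub_image) _.
rewrite card_morphim setIid.
exact: dvdn_leq (indexg_gt0 _ _) (indexgS G cent1_sub_ker_comm_coset).
Qed.

Lemma mem_commg_rcoset v : v \in [~: N, G] -> exists2 g, g \in G & v \in K :* [~ c, g].
Proof.
move=> NGv; have Gc := subsetP sAG c (subsetP sNA c Nc).
have Gv : v \in G := subsetP (comm_subG (subset_trans sNA sAG) (subxx G)) v NGv.
have /morphimP[g _ Gg img] := subsetP commg_quotient_sub_image _ (mem_quotient K NGv).
by exists g => //; apply/rcoset_kercosetP; rewrite ?(subsetP nKG) ?groupR.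
Qed.

End CommutatorImage.

(* In the abelian group A, [c, s, w] = (c^s)^-1 c (c^w)^-1 c^(sw), and
   c^(sw) = c^(ws) because [s, w] centralises A. *)
Lemma comm3_swap (gT : finGroupType) (G A : {group gT}) (c s w : gT) :
    A <| G -> abelian A -> c \in A -> s \in G -> w \in G -> [~ s, w] \in 'C(A) ->
  [~ c, s, w] = [~ c, w, s].
Proof.
move=> nsAG abA Ac Gs Gw cAsw.
have AJ g : g \in G -> c ^ g \in A.
  by move=> Gg; rewrite memJ_norm // (subsetP (normal_norm nsAG)).
have c_sw : c ^ (s * w) = c ^ (w * s).
  rewrite (commgC s w) conjgM; apply/conjg_fixP/commgP/commute_sym.
  by apply: (centP cAsw); rewrite AJ ?groupM.
have Acs : (c ^ s)^-1 \in A by rewrite groupV AJ.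
have Acw : (c ^ w)^-1 \in A by rewrite groupV AJ.
rewrite !commgEl [(c^-1 * _) ^ w]conjMg [(c^-1 * _) ^ s]conjMg !conjVg -!conjgM c_sw.
rewrite !(invMg c^-1) invgK.
move: (c ^ s)^-1 (c ^ w)^-1 Acs Acw (c ^ (w * s)) => a b Aa Ab d.
have cA x y : x \in A -> y \in A -> x * y = y * x := fun Ax Ay => centsP abA x Ax y Ay.
by rewrite !mulgA -(mulgA a) (cA c) // (cA a) ?groupM // -(mulgA b) (cA c) // mulgA.
Qed.

Lemma index_proper_dvdn_prime (gT : finGroupType) p (H K : {group gT}) :
  prime p -> H \proper K -> #|K : H| %| p -> #|K : H| = p.
Proof.
by move=> p_pr /andP[_ not_sKH] /(prime_nt_dvdP p_pr); apply; rewrite indexg_eq1.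
Qed.

Lemma proper_joing_cycle (gT : finGroupType) (H : {group gT}) x :
  x \notin H -> H \proper <[x]> <*> H.
Proof.
move=> notHx; rewrite properE joing_subr /=; apply: contra notHx => sXH.
by apply: (subsetP sXH); rewrite mem_gen // inE cycle_id.
Qed.

Section PGroupIndex.

Variables (gT : finGroupType) (p : nat) (G : {group gT}).
Hypothesis pG : p.-group G.

Lemma dvdn_index_proper (H K : {group gT}) : H \proper K -> K \subset G -> p %| #|K : H|.
Proof.
move=> pHK sKG; have : 1 < #|K : H| by rewrite indexg_gt1; case/andP: pHK.
have /p_natP[k ->] : p.-nat #|K : H| := pnat_dvd (dvdn_indexg K H) (pgroupS sKG pG).
by case: k => [|k] //; rewrite expnS dvdn_mulr.
Qed.

Lemma index_dvdn_proper_overgroup n (A H : {group gT}) :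
  #|G : A| %| p ^ n.+1 -> A \proper H -> H \subset G -> #|G : H| %| p ^ n.
Proof.
move=> iA pAH sHG; have /dvdnP[k iHA] := dvdn_index_proper pAH sHG.
have p_gt0 : 0 < p.
  by move: (indexg_gt0 H A); rewrite iHA muln_gt0 => /andP[].
rewrite -(Lagrange_index sHG (proper_sub pAH)) iHA mulnA expnSr in iA.
by rewrite (dvdn_trans (dvdn_mulr k (dvdnn _))) // -(dvdn_pmul2r p_gt0).
Qed.

Lemma joing_cycles_eq (A : {group gT}) x y :
    A \subset 'Phi(G) -> #|G : A| %| p ^ 2 -> x \in G -> x \notin A ->
    y \in G -> y \notin <[x]> <*> A ->
  <[x]> <*> <[y]> = G.
Proof.
move=> sAPhi iA Gx notAx Gy notXy.
have sAG : A \subset G := subset_trans sAPhi (Phi_sub G).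
have sXG : <[x]> <*> A \subset G by rewrite join_subG cycle_subG Gx.
have sYG : <[y]> <*> (<[x]> <*> A) \subset G by rewrite join_subG cycle_subG Gy.
have iX := index_dvdn_proper_overgroup iA (proper_joing_cycle notAx) sXG.
have := index_dvdn_proper_overgroup iX (proper_joing_cycle notXy) sYG.
rewrite expn0 dvdn1 indexg_eq1 => sGY.
apply: Phi_nongen; apply/eqP; rewrite eqEsubset join_subG Phi_sub subUset.
rewrite !cycle_subG Gx Gy /=; apply: subset_trans sGY _.
rewrite !join_subG !cycle_subG !mem_gen ?inE ?cycle_id ?orbT //=.
by rewrite (subset_trans sAPhi) // joing_subl.
Qed.

End PGroupIndex.

Lemma lcn_proper_nil_class (gT : finGroupType) (G : {group gT}) n :
  nilpotent G -> n < nil_class G -> 'L_n.+2(G) \proper 'L_n.+1(G).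
Proof.
move=> nilG lt_n_cl; rewrite lcnSn; apply: (nil_comm_properl nilG (lcn_sub _ _)).
  by apply/eqP=> /(lcn_nil_classP n nilG); rewrite leqNgt lt_n_cl.
by rewrite subsetI subxx lcn_norm.
Qed.

Lemma joing_cycle_der1_neq (gT : finGroupType) (G : {group gT}) x :
  nilpotent G -> ~~ abelian G -> x \in G -> <[x]> <*> G^`(1) != G.
Proof.
move=> nilG not_abG Gx; apply: contra not_abG => /eqP defG.
apply/cyclic_abelian/(cyclic_nilpotent_quo_der1_cyclic nilG).
have nG'x : x \in 'N(G^`(1)) := subsetP (der_norm 1 G) x Gx.
have : cyclic ((<[x]> <*> G^`(1)) / G^`(1)).
  by rewrite quotientYidr ?cycle_subG // quotient_cycle ?cycle_cyclic.
by rewrite [X in cyclic (X / _)]defG.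
Qed.

Lemma index_joing_cycle_dvdn (gT : finGroupType) (H : {group gT}) x :
  x \in 'N(H) -> #|<[x]> <*> H : H| %| #[x].
Proof.
move=> nHx; rewrite -card_quotient ?join_subG ?cycle_subG ?nHx ?normG //.
by rewrite quotientYidr ?cycle_subG // quotient_cycle // morph_order.
Qed.

Section ClassFourGroup.

Variables (p : nat) (gT : finGroupType) (G : {group gT}).
Hypotheses (p_pr : prime p) (cardG : #|G| = (p ^ 7)%N) (classG : nil_class G = 4).
Hypotheses (abelL2 : p.-abelem 'L_2(G)) (cardL2 : #|'L_2(G)| = (p ^ 5)%N).

Let p_gt0 : 0 < p := prime_gt0 p_pr.
Let pG : p.-group G. Proof. by rewrite /pgroup cardG pnatX pnat_id. Qed.
Let nilG : nilpotent G := pgroup_nil pG.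
Let abL2 : abelian 'L_2(G) := abelem_abelian abelL2.
Let nsL2 : 'L_2(G) <| G := lcn_normal 2 G.
Let sLG n : 'L_n(G) \subset G := lcn_sub n G.
Let nLG n : G \subset 'N('L_n(G)) := lcn_norm n G.

Let lcn_proper n : n < 4 -> 'L_n.+2(G) \proper 'L_n.+1(G).
Proof. by rewrite -classG; apply: lcn_proper_nil_class. Qed.

Let L5_trivial : 'L_5(G) = 1.
Proof. by apply/(lcn_nil_classP 4 nilG); rewrite classG. Qed.

Let cGL4 : 'L_4(G) \subset 'C(G).
Proof. by apply/commG1P; exact: L5_trivial. Qed.

Let not_abG : ~~ abelian G.
Proof. by rewrite -nil_class1 classG. Qed.

Let sL2Phi : 'L_2(G) \subset 'Phi(G).
Proof. by rewrite (Phi_joing pG) joing_subl. Qed.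

Lemma index_L2 : #|G : 'L_2(G)| = (p ^ 2)%N.
Proof. by rewrite -divgS ?sLG // cardG cardL2 -expnB. Qed.

Let iL2 : #|G : 'L_2(G)| %| p ^ 2.
Proof. by rewrite index_L2. Qed.

Lemma order_dvdn_L2 x : x \in 'L_2(G) -> #[x] %| p.
Proof.
move=> L2x; have [-> | ntx] := eqVneq x 1; first by rewrite order1.
by rewrite (abelem_order_p abelL2).
Qed.

Lemma index_cent1_L2_le c : c \in 'L_2(G) -> #|G : 'C_G[c]| <= p ^ 2.
Proof.
move=> L2c; rewrite -index_L2 dvdn_leq ?indexg_gt0 // indexgS //.
by rewrite subsetI sLG sub_cent1 (subsetP abL2).
Qed.

Lemma index_cent1_le_p u w :
  u \in 'L_2(G) -> w \in G -> w \notin 'L_2(G) -> commute u w -> #|G : 'C_G[u]| <= p.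
Proof.
move=> L2u Gw notL2w cuw.
have sBC : <[w]> <*> 'L_2(G) \subset 'C_G[u].
  rewrite join_subG cycle_subG inE Gw subsetI sLG sub_cent1 (subsetP abL2) //=.
  by rewrite andbT; apply/cent1P/commute_sym.
have sBG : <[w]> <*> 'L_2(G) \subset G by rewrite join_subG cycle_subG Gw sLG.
have := index_dvdn_proper_overgroup pG iL2 (proper_joing_cycle notL2w) sBG.
by move/(dvdn_trans (indexgS G sBC))/(dvdn_leq p_gt0).
Qed.

Lemma index_L2_L3 : #|'L_2(G) : 'L_3(G)| = p.
Proof.
apply: (index_proper_dvdn_prime p_pr (@lcn_proper 1 isT)).
have [_ [x Gx notL2x]] := properP (@lcn_proper 0 isT).
have /properP[_ [y Gy notXy]] : <[x]> <*> 'L_2(G) \proper G.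
  by rewrite properEneq joing_cycle_der1_neq // join_subG cycle_subG Gx sLG.
have defG := joing_cycles_eq pG sL2Phi iL2 Gx notL2x Gy notXy.
have nL3 z : z \in G -> z \in 'N('L_3(G)) := subsetP (nLG 3) z.
have defQ : G / 'L_3(G) = <[coset 'L_3(G) x]> <*> <[coset 'L_3(G) y]>.
  by rewrite -[X in X / _]defG quotientY ?cycle_subG ?nL3 // !quotient_cycle ?nL3.
have defL2Q : 'L_2(G) / 'L_3(G) = <[coset 'L_3(G) [~ x, y]]>.
  have := der1_joing_cycles (x := coset 'L_3(G) x) (y := coset 'L_3(G) y).
  rewrite /= -defQ -(morphR (coset_morphism _)) ?nL3 // -(quotient_der 1 (nLG 3)).
  apply; apply: (subsetP (subset_trans (lcn_central 2 G) (subsetIr _ _))).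
  exact: mem_quotient (mem_commg Gx Gy).
rewrite -card_quotient ?(subset_trans (sLG 2) (nLG 3)) // defL2Q.
exact: dvdn_trans (morph_order _ (nL3 _ (groupR Gx Gy))) (order_dvdn_L2 (mem_commg Gx Gy)).
Qed.

Lemma card_L3 : #|'L_3(G)| = (p ^ 4)%N.
Proof. by rewrite -(divg_indexS (lcn_subS 2 G)) cardL2 index_L2_L3 expnS mulKn. Qed.

Lemma index_lcn_succ_le n c :
    prime #|'L_n.+2(G) : 'L_n.+3(G)| -> c \in 'L_n.+2(G) -> c \notin 'L_n.+3(G) ->
  #|'L_n.+3(G) : 'L_n.+4(G)| <= p ^ 2.
Proof.
move=> prime_n Lc notLc; have sLL2 := lcn_sub_leq G (isT : 2 <= n.+2).
apply: leq_trans (index_cent1_L2_le (subsetP sLL2 c Lc)).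
exact: (index_commg_le_cent1 nsL2 abL2 sLL2 (lcn_subS _ _) (subxx _) prime_n Lc notLc).
Qed.

Lemma index_L3_L4 : #|'L_3(G) : 'L_4(G)| = (p ^ 2)%N.
Proof.
have [_ [c L2c notL3c]] := properP (@lcn_proper 1 isT).
have prime23 : prime #|'L_2(G) : 'L_3(G)| by rewrite index_L2_L3.
have le_p2 := index_lcn_succ_le prime23 L2c notL3c.
have /dvdn_pfactor[//|m _ def_m] : #|'L_3(G) : 'L_4(G)| %| p ^ 4.
  by rewrite -card_L3 dvdn_indexg.
have p_gt1 := prime_gt1 p_pr.
case: m def_m => [|[|[|m]]] def_m //.
- by case/andP: (@lcn_proper 2 isT) => _ /negP[]; rewrite -indexg_eq1 def_m.
- have [_ [d L3d notL4d]] := properP (@lcn_proper 2 isT).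
  have prime34 : prime #|'L_3(G) : 'L_4(G)| by rewrite def_m.
  have := index_lcn_succ_le prime34 L3d notL4d.
  rewrite L5_trivial indexg1 -(divg_indexS (lcn_subS 3 G)) card_L3 def_m.
  by rewrite expnS mulKn // leq_exp2l.
- by move: le_p2; rewrite def_m leq_exp2l.
Qed.

Lemma card_L4 : #|'L_4(G)| = (p ^ 2)%N.
Proof. by rewrite -(divg_indexS (lcn_subS 3 G)) card_L3 index_L3_L4 -expnB. Qed.

Lemma center_sub_L2 : 'Z(G) \subset 'L_2(G).
Proof.
apply/subsetP=> z /setIP[Gz cGz]; apply: contraT => notL2z.
have /properP[_ [t Gt notZt]] : <[z]> <*> 'L_2(G) \proper G.
  by rewrite properEneq joing_cycle_der1_neq // join_subG cycle_subG Gz sLG.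
case/negP: not_abG; rewrite -(joing_cycles_eq pG sL2Phi iL2 Gz notL2z Gt notZt).
rewrite abelianY !cycle_abelian cycle_subG /=.
by apply: (subsetP _ t Gt); rewrite centsC cycle_subG.
Qed.

Lemma center_sub_L3 : 'Z(G) \subset 'L_3(G).
Proof.
apply/subsetP=> z Zz; apply: contraT => notL3z.
have [_ cGz] := setIP Zz; have L2z := subsetP center_sub_L2 z Zz.
have prime23 : prime #|'L_2(G) : 'L_3(G)| by rewrite index_L2_L3.
have := index_commg_le_cent1 nsL2 abL2 (subxx _) (lcn_subS 2 G) (subxx _) prime23 L2z notL3z.
rewrite (setIidPl _) ?sub_cent1 // indexgg index_L3_L4 leqNgt -(expn0 p).
by rewrite ltn_exp2l ?prime_gt1.
Qed.

Lemma index_L3_joing_cycle z :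
  z \in 'L_3(G) -> z \notin 'L_4(G) -> #|'L_3(G) : <[z]> <*> 'L_4(G)| = p.
Proof.
move=> L3z notL4z; have L2z := subsetP (lcn_subS 2 G) z L3z.
have sML3 : <[z]> <*> 'L_4(G) \subset 'L_3(G).
  by rewrite join_subG cycle_subG L3z lcn_subS.
have iML4 : #|<[z]> <*> 'L_4(G) : 'L_4(G)| = p.
  apply: (index_proper_dvdn_prime p_pr (proper_joing_cycle notL4z)).
  have nL4z : z \in 'N('L_4(G)) := subsetP (nLG 4) z (subsetP (sLG 3) z L3z).
  exact: dvdn_trans (index_joing_cycle_dvdn nL4z) (order_dvdn_L2 L2z).
apply/eqP; rewrite -(eqn_pmul2r p_gt0) -{1}iML4.
by rewrite (Lagrange_index sML3 (joing_subr _ _)) index_L3_L4 mulnn.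
Qed.

Lemma commute_L4_rcoset_comm c s w u :
    c \in 'L_2(G) -> s \in G -> w \in G -> [~ c, w] \in 'C(G) ->
    u \in 'L_4(G) :* [~ c, s] ->
  commute u w.
Proof.
move=> L2c Gs Gw cG_cw /rcosetP[l L4l ->]; apply/commgP/eqP; rewrite commMgJ.
have /commgP/eqP -> := centP (subsetP cGL4 l L4l) w Gw.
rewrite conj1g mul1g (comm3_swap nsL2 abL2 L2c Gs Gw) ?(subsetP abL2) ?mem_commg //.
exact/eqP/commgP/(centP cG_cw).
Qed.

Lemma center_sub_L4 : 'Z(G) \subset 'L_4(G).
Proof.
apply/subsetP=> z Zz; apply: contraT => notL4z.
have [_ cGz] := setIP Zz; have L3z := subsetP center_sub_L3 z Zz.
have [_ [c L2c notL3c]] := properP (@lcn_proper 1 isT).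
have prime23 : prime #|'L_2(G) : 'L_3(G)| by rewrite index_L2_L3.
have L4_rcoset :=
  mem_commg_rcoset nsL2 abL2 (subxx _) (lcn_subS 2 G) (subxx _) prime23 L2c notL3c.
have [w Gw /rcosetP[l L4l def_z]] := L4_rcoset z L3z.
have cG_cw : [~ c, w] \in 'C(G).
  have -> : [~ c, w] = l^-1 * z by rewrite def_z mulKg.
  by rewrite groupM ?groupV // (subsetP cGL4).
have notL2w : w \notin 'L_2(G).
  apply: contra notL4z => L2w; have /commgP/eqP cw1 := centsP abL2 c L2c w L2w.
  by rewrite def_z cw1 mulg1.
pose M := (<[z]> <*> 'L_4(G))%G.
have iL3M : #|'L_3(G) : M| = p := index_L3_joing_cycle L3z notL4z.
have /subsetPn[u L3u notMu] : ~~ ('L_3(G) \subset M).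
  by rewrite -indexg_eq1 iL3M gtn_eqF ?prime_gt1.
have [s Gs u_rcoset] := L4_rcoset u L3u.
have cuw := commute_L4_rcoset_comm L2c Gs Gw cG_cw u_rcoset.
have sML3 : M \subset 'L_3(G) by rewrite join_subG cycle_subG L3z lcn_subS.
have cGM : M \subset 'C(G) by rewrite join_subG cycle_subG cGz.
have prime3M : prime #|'L_3(G) : M| by rewrite iL3M.
have := index_commg_le_cent1 nsL2 abL2 (lcn_sub_leq G (isT : 2 <= 3)) sML3
  (joing_subr _ _) prime3M L3u notMu.
rewrite (commG1P cGM) indexg1 card_L4 => le_p2.
have L2u := subsetP (lcn_subS 2 G) u L3u.
have := leq_trans le_p2 (index_cent1_le_p L2u Gw notL2w cuw).
by rewrite leqNgt -[X in X < _](expn1 p) ltn_exp2l ?prime_gt1.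
Qed.

Lemma center_eq_L4 : 'Z(G) = 'L_4(G).
Proof. by apply/eqP; rewrite eqEsubset center_sub_L4 subsetI sLG cGL4. Qed.

End ClassFourGroup.

Theorem lemma4p1 (p : nat) (gT : finGroupType) (G : {group gT}) :
  prime p ->
  #|G| = (p ^ 7)%N ->
  nil_class G = 4 ->
  p.-abelem 'L_2(G) ->
  #|'L_2(G)| = (p ^ 5)%N ->
  'Z(G) = 'L_4(G) /\ #|'L_4(G)| = (p ^ 2)%N.
Proof.
move=> p_pr cardG classG abelL2 cardL2.
split; first exact: center_eq_L4 p_pr cardG classG abelL2 cardL2.
exact: card_L4 p_pr cardG classG abelL2 cardL2.
Qed.
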